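(* Let $G$ be a mixed graph without directed cycles with maxrank $\Lambda=\Lambda(G)$, and for $i=0,\dots,\Lambda$ let $L_i$ be the set of vertices of inrank $i$. Then $\chi(G)\le\sum_{i=0}^{\Lambda}\chi_{\mathrm u}(G[L_i])$, where $\chi_{\mathrm u}(G[L_i])$ is the chromatic number of the undirected graph $G[L_i]$ (which contains no arcs). Moreover, the bound is tight: for all integers $\ell,k\ge1$ there is a mixed graph $G$ with $\Lambda(G)=\ell$, $\chi_{\mathrm u}(G[L_i])=k$ for every $i\in\{0,\dots,\ell\}$, and $\chi(G)=(\ell+1)k$.
   Context: A mixed graph $G$ consists of a finite vertex set $V(G)$, a set $E(G)$ of undirected edges and a set $A(G)$ of directed arcs; it is simple and contains no directed cycle. A $k$-coloring $c\colon V(G)\to\{1,\dots,k\}$ is proper if $c(u)\neq c(v)$ for every edge $\{u,v\}$ and $c(u)<c(v)$ for every arc $(u,v)$; $\chi(G)$ is the minimum such $k$. The maxrank $\Lambda(G)$ is the number of arcs on a longest directed path in $G$; the inrank of a vertex $v$ is the number of arcs on a longest directed path ending at $v$. $G[L]$ is the mixed subgraph induced by $L$. *)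

From mathcomp Require Import all_boot.
Set Implicit Arguments. Unset Strict Implicit. Unset Printing Implicit Defensive.

Section MixedGraphs.
Variable T : finType.

(* A mixed graph on vertex set T: undirected edges e (symmetric relation),
   directed arcs a ((u,v) with a u v). *)

Definition no_directed_cycle (a : rel T) : Prop :=
  forall (x : T) (p : seq T), path a x p -> last x p = x -> p = [::].

Definition mixed_graph (e a : rel T) : Prop :=
  [/\ symmetric e, irreflexive e, irreflexive a,
      (forall u v, e u v -> ~~ a u v) & no_directed_cycle a].

Definition dpath_ending (a : rel T) (i : nat) (v : T) : bool :=
  [exists x : T, exists t : i.-tuple T, path a x t && (last x t == v)].

Definition dpath_len (a : rel T) (i : nat) : bool :=
  [exists x : T, exists t : i.-tuple T, path a x t].

(* inrank: number of arcs of a longest directed path ending at v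
   (in a graph without directed cycles every path has < #|T| arcs) *)
Definition inrank (a : rel T) (v : T) : nat :=
  \max_(i < #|T| | dpath_ending a i v) i.

Definition maxrank (a : rel T) : nat :=
  \max_(i < #|T| | dpath_len a i) i.

Definition level (a : rel T) (i : nat) : {set T} :=
  [set v | inrank a v == i].

(* proper k-coloring of the mixed subgraph induced by S, colors 1..k
   (vertices outside S get the dummy value 0) *)
Definition colorable (e a : rel T) (S : {set T}) (k : nat) : bool :=
  [exists c : {ffun T -> 'I_k.+1},
    [forall u, (u \in S) ==> (0 < c u)] &&
    [forall u, forall v, ((u \in S) && (v \in S)) ==>
        ((e u v ==> (c u != c v)) && (a u v ==> (c u < c v)))]].

Definition ucolorable (e : rel T) (S : {set T}) (k : nat) : bool :=
  [exists c : {ffun T -> 'I_k.+1},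
    [forall u, (u \in S) ==> (0 < c u)] &&
    [forall u, forall v, ((u \in S) && (v \in S)) ==>
        (e u v ==> (c u != c v))]].

Definition is_chi (e a : rel T) (S : {set T}) (k : nat) : Prop :=
  colorable e a S k /\ forall j, colorable e a S j -> k <= j.

Definition is_chi_u (e : rel T) (S : {set T}) (k : nat) : Prop :=
  ucolorable e S k /\ forall j, ucolorable e S j -> k <= j.

End MixedGraphs.

(* Arcs strictly increase the inrank, so colouring the level L_i
   properly with chi_u(G[L_i]) fresh colours, in increasing blocks of colours as
   i grows, gives a proper colouring of G.  For tightness, stack l+1 copies of
   K_k and orient an arc from every vertex of a lower copy to every vertex of a
   higher one: the levels are the copies, and any two vertices are joined by an
   edge or an arc, so all (l+1)k vertices need distinct colours. *)

From mathcomp Require Import all_boot zify.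

Set Implicit Arguments.
Unset Strict Implicit.
Unset Printing Implicit Defensive.

Section DirectedPaths.
Variables (T : finType) (a : rel T).

Lemma leq_rank_path (r : T -> nat) : (forall u v, a u v -> r u < r v) ->
  forall x p, path a x p -> r x + size p <= r (last x p).
Proof.
move=> r_arc x p; elim: p x => [|y p IHp] x /=; first by rewrite addn0.
by case/andP=> /r_arc lt_xy /IHp; lia.
Qed.

Lemma rank_acyclic (r : T -> nat) : (forall u v, a u v -> r u < r v) ->
  no_directed_cycle a.
Proof.
move=> r_arc x [|y p] // /(leq_rank_path r_arc) + last_x; rewrite last_x /=.
by rewrite addnS ltnNge leq_addr.
Qed.

Lemma acyclic_path_uniq : no_directed_cycle a ->
  forall x p, path a x p -> uniq (x :: p).
Proof.
move=> acyc x p; elim: p x => [|y p IHp] x //= /andP[a_xy p_y].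
rewrite -/(uniq (y :: p)) IHp // andbT.
have : path a x (y :: p) by rewrite /= a_xy.
move: (y :: p) => q p_q; apply/negP => x_q.
case/splitPr: x_q p_q => p1 p2; rewrite cat_path => /andP[p_p1 /andP[a_x _]].
have := acyc x (rcons p1 x); rewrite rcons_path p_p1 a_x last_rcons.
by move=> /(_ isT erefl) /eqP; rewrite -size_eq0 size_rcons.
Qed.

Lemma acyclic_path_size : no_directed_cycle a ->
  forall x p, path a x p -> size p < #|T|.
Proof.
move=> acyc x p /(acyclic_path_uniq acyc) /card_uniqP /= card_p.
by have := max_card (mem (x :: p)); rewrite card_p.
Qed.

Lemma dpath_endingP i v :
  reflect (exists x p, [/\ size p = i, path a x p & last x p = v])
          (dpath_ending a i v).
Proof.
apply: (iffP existsP) => [[x /existsP[t /andP[p_t /eqP last_t]]]|].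
  by exists x, t; rewrite size_tuple.
case=> x [p [size_p p_p last_p]]; exists x; apply/existsP.
have size_p' : size p == i by apply/eqP.
by exists (Tuple size_p'); rewrite /= p_p last_p eqxx.
Qed.

Lemma dpath_lenP i : reflect (exists x p, size p = i /\ path a x p) (dpath_len a i).
Proof.
apply: (iffP existsP) => [[x /existsP[t p_t]]|[x [p [size_p p_p]]]].
  by exists x, t; rewrite size_tuple.
exists x; apply/existsP; have size_p' : size p == i by apply/eqP.
by exists (Tuple size_p').
Qed.

Lemma dpath_ending0 v : dpath_ending a 0 v.
Proof. by apply/dpath_endingP; exists v, [::]. Qed.

Lemma dpath_endingS i u v : dpath_ending a i u -> a u v -> dpath_ending a i.+1 v.
Proof.
case/dpath_endingP=> x [p [size_p p_p last_p]] a_uv; apply/dpath_endingP.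
exists x, (rcons p v).
by rewrite size_rcons rcons_path p_p last_p a_uv last_rcons size_p.
Qed.

Lemma dpath_ending_len i v : dpath_ending a i v -> dpath_len a i.
Proof. by case/dpath_endingP=> x [p [size_p p_p _]]; apply/dpath_lenP; exists x, p. Qed.

Lemma dpath_ending_inrank v : dpath_ending a (inrank a v) v.
Proof.
have T_gt0 : 0 < #|T| by apply/card_gt0P; exists v.
have : 0 < #|[pred i : 'I_#|T| | dpath_ending a i v]|.
  by apply/card_gt0P; exists (Ordinal T_gt0); rewrite inE dpath_ending0.
by case/(eq_bigmax_cond val) => i; rewrite inE /inrank => + ->.
Qed.

Hypothesis acyc : no_directed_cycle a.

Lemma leq_inrank i v : dpath_ending a i v -> i <= inrank a v.
Proof.
move=> end_v; have lt_iT : i < #|T|.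
  by case/dpath_endingP: end_v => x [p [<- p_p _]]; apply: acyclic_path_size p_p.
exact: (leq_bigmax_cond (Ordinal lt_iT)).
Qed.

Lemma inrank_arc u v : a u v -> inrank a u < inrank a v.
Proof. by move=> a_uv; apply/leq_inrank/(dpath_endingS (dpath_ending_inrank u)). Qed.

Lemma leq_maxrank i : dpath_len a i -> i <= maxrank a.
Proof.
move=> len_i; have lt_iT : i < #|T|.
  by case/dpath_lenP: len_i => x [p [<- p_p]]; apply: acyclic_path_size p_p.
exact: (leq_bigmax_cond (Ordinal lt_iT)).
Qed.

Lemma inrank_le_maxrank v : inrank a v <= maxrank a.
Proof. exact/leq_maxrank/dpath_ending_len/dpath_ending_inrank. Qed.

Lemma maxrank_eq n : (forall v, inrank a v <= n) -> (exists v, inrank a v = n) ->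
  maxrank a = n.
Proof.
move=> inrank_le [v inrank_v]; apply/eqP; rewrite eqn_leq; apply/andP; split.
  apply/bigmax_leqP => i /dpath_lenP[x [p [size_p p_p]]].
  apply: leq_trans (inrank_le (last x p)); apply: leq_inrank.
  by apply/dpath_endingP; exists x, p.
by rewrite -inrank_v; apply/leq_maxrank/dpath_ending_len/dpath_ending_inrank.
Qed.

End DirectedPaths.

Lemma inrankE (T : finType) (a : rel T) (r : T -> nat) :
  (forall u v, a u v -> r u < r v) ->
  (forall v, 0 < r v -> exists2 u, a u v & r u = (r v).-1) ->
  inrank a =1 r.
Proof.
move=> r_arc r_pred v; have acyc := rank_acyclic r_arc.
have end_r n w : r w = n -> dpath_ending a n w.
  elim: n w => [|n IHn] w r_w; first exact: dpath_ending0.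
  have [|u a_uw r_u] := r_pred w; first by rewrite r_w.
  by apply: dpath_endingS a_uw; apply: IHn; rewrite r_u r_w.
apply/eqP; rewrite eqn_leq (leq_inrank acyc (end_r _ _ erefl)) andbT.
case/dpath_endingP: (dpath_ending_inrank a v) => x [p [<- p_p <-]].
exact: leq_trans (leq_addl _ _) (leq_rank_path r_arc p_p).
Qed.

Section Colorings.
Variables (T : finType) (e a : rel T).

Definition proper_coloring (S : {set T}) (k : nat) (c : T -> nat) : Prop :=
  [/\ {in S, forall u, 0 < c u <= k},
      {in S &, forall u v, e u v -> c u != c v} &
      {in S &, forall u v, a u v -> c u < c v}].

Lemma colorableP S k : reflect (exists c, proper_coloring S k c) (colorable e a S k).
Proof.
apply: (iffP existsP) => [[c /andP[/forallP c_pos /forallP c_ok]]|[c [c_bnd c_e c_a]]].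
  exists (fun u => val (c u)); split=> [u S_u|u v S_u S_v|u v S_u S_v].
  - by rewrite (implyP (c_pos u)) //= -ltnS ltn_ord.
  - by have /forallP/(_ v) := c_ok u; rewrite S_u S_v /= => /andP[/implyP + _].
  - by have /forallP/(_ v) := c_ok u; rewrite S_u S_v /= => /andP[_ /implyP].
have c_ord u : u \in S -> nat_of_ord (inord (c u) : 'I_k.+1) = c u.
  by move=> /c_bnd /andP[_ le_ck]; rewrite inordK.
exists [ffun u => inord (c u)]; apply/andP; split.
  apply/forallP => u; apply/implyP => S_u.
  by rewrite ffunE c_ord //; case/andP: (c_bnd u S_u).
apply/forallP => u; apply/forallP => v; apply/implyP => /andP[S_u S_v].
rewrite !ffunE -(inj_eq val_inj) /= !c_ord //.
by apply/andP; split; apply/implyP; [apply: c_e | apply: c_a].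
Qed.

Definition mixed_clique (A : {set T}) : Prop :=
  {in A &, forall u v, u != v -> [|| e u v, a u v | a v u]}.

Lemma clique_card_leq (S A : {set T}) (k : nat) :
  colorable e a S k -> A \subset S -> mixed_clique A -> #|A| <= k.
Proof.
case/colorableP=> c [c_bnd c_e c_a] /subsetP sAS clA.
have c_inj : {in A &, injective c}.
  move=> u v A_u A_v eq_c; apply/eqP; apply: contraT => /(clA u v A_u A_v).
  have [S_u S_v] := (sAS u A_u, sAS v A_v).
  case/or3P=> [e_uv | a_uv | a_vu].
  - by have := c_e u v S_u S_v e_uv; rewrite eq_c eqxx.
  - by have := c_a u v S_u S_v a_uv; rewrite eq_c ltnn.
  - by have := c_a v u S_v S_u a_vu; rewrite eq_c ltnn.
rewrite cardE -(size_map c) -[k](size_iota 1).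
apply: uniq_leq_size => [|i].
  by rewrite map_inj_in_uniq ?enum_uniq // => u v; rewrite !mem_enum; apply: c_inj.
case/mapP=> u; rewrite mem_enum => /sAS/c_bnd /andP[c_pos c_le] c_u.
by rewrite c_u mem_iota add1n ltnS c_pos.
Qed.

End Colorings.

Lemma ucolorableE (T : finType) (e : rel T) S k :
  ucolorable e S k = colorable e [rel _ _ | false] S k.
Proof.
apply: eq_existsb => c; congr (_ && _); apply: eq_forallb => u.
by apply: eq_forallb => v; rewrite andbT.
Qed.

Lemma leq_sum_ord (k : nat -> nat) m n : m <= n -> \sum_(i < m) k i <= \sum_(i < n) k i.
Proof.
move=> le_mn; rewrite (big_ord_widen _ _ le_mn).
by rewrite [X in _ <= X](bigID (fun i : 'I_n => i < m)) leq_addr.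
Qed.

Section LayeredColoring.
Variables (T : finType) (e a : rel T) (r : T -> nat) (M : nat) (k : nat -> nat).
Hypotheses (r_arc : forall u v, a u v -> r u < r v) (r_le : forall u, r u <= M).

Lemma layered_colorable :
  (forall i, i <= M -> ucolorable e [set u | r u == i] (k i)) ->
  colorable e a [set: T] (\sum_(i < M.+1) k i).
Proof.
move=> col_i.
have /fin_all_exists[c c_ok] (i : 'I_M.+1) :
    exists c, proper_coloring e [rel _ _ | false] [set u | r u == i] (k i) c.
  by apply/colorableP; rewrite -ucolorableE; apply: col_i; rewrite -ltnS.
(* Layer i uses the colours off i + 1, ..., off i + k i. *)
pose off n := \sum_(i < n) k i.
pose lc u := c (inord (r u)) u.
have lc_bnd u : 0 < lc u <= k (r u).
  have r_u : nat_of_ord (inord (r u) : 'I_M.+1) = r u by rewrite inordK ?ltnS.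
  have [c_bnd _ _] := c_ok (inord (r u)).
  by move: (c_bnd u); rewrite inE r_u eqxx => /(_ isT).
pose col u := off (r u) + lc u.
have col_hi u : col u <= off (r u).+1.
  by rewrite /off big_ord_recr leq_add2l; case/andP: (lc_bnd u).
have col_lt u v : r u < r v -> col u < col v.
  move=> lt_uv; apply: leq_ltn_trans (col_hi u) _.
  apply: leq_ltn_trans (leq_sum_ord k lt_uv) _.
  by rewrite -[X in X < _]addn0 ltn_add2l; case/andP: (lc_bnd v).
apply/colorableP; exists col; split=> [u _|u v _ _ e_uv|u v _ _ /r_arc/col_lt //].
  rewrite ltn_addl; last by case/andP: (lc_bnd u).
  by apply: leq_trans (col_hi u) (leq_sum_ord k _); rewrite ltnS.
case: (ltngtP (r u) (r v)) => [/col_lt lt_c | /col_lt lt_c | eq_r].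
- by rewrite neq_ltn lt_c.
- by rewrite neq_ltn lt_c orbT.
- rewrite /col /lc eq_r eqn_add2l; have [_ + _] := c_ok (inord (r v)).
  by apply=> //; rewrite inE inordK ?ltnS ?eq_r.
Qed.

End LayeredColoring.

Lemma chi_le_sum_chi_u_levels (T : finType) (e a : rel T) (chiG : nat) (chiL : nat -> nat) :
  mixed_graph e a -> is_chi e a [set: T] chiG ->
  (forall i, i <= maxrank a -> is_chi_u e (level a i) (chiL i)) ->
  chiG <= \sum_(i < (maxrank a).+1) chiL i.
Proof.
case=> _ _ _ _ acyc [_ chiG_min] chiL_ok; apply: chiG_min.
apply: layered_colorable (inrank_arc acyc) (inrank_le_maxrank acyc) _.
by move=> i /chiL_ok[].
Qed.

Section StackedCliques.
Variables l k : nat.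

Definition stack_edge : rel ('I_l.+1 * 'I_k) := fun u v => (u.1 == v.1) && (u.2 != v.2).
Definition stack_arc : rel ('I_l.+1 * 'I_k) := fun u v => u.1 < v.1.

Lemma stack_mixed_graph : mixed_graph stack_edge stack_arc.
Proof.
split=> [u v|u|u|u v /andP[/eqP eq_1 _]|].
- by rewrite /stack_edge eq_sym [u.2 == _]eq_sym.
- by rewrite /stack_edge !eqxx.
- exact: ltnn.
- by rewrite /stack_arc eq_1 ltnn.
by apply: (@rank_acyclic _ _ (fun u => val u.1)).
Qed.

Lemma inrank_stack : inrank stack_arc =1 (fun u => val u.1).
Proof.
apply: inrankE => // -[i y] /= i_gt0.
have lt_i1 : i.-1 < l.+1 by apply: leq_ltn_trans (leq_pred i) _.
by exists (Ordinal lt_i1, y); rewrite // /stack_arc /= prednK ?ltnn.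
Qed.

Lemma maxrank_stack : 0 < k -> maxrank stack_arc = l.
Proof.
move=> k_gt0; have [_ _ _ _ acyc] := stack_mixed_graph.
apply: (maxrank_eq acyc) => [v|]; first by rewrite inrank_stack -ltnS ltn_ord.
by exists (ord_max, Ordinal k_gt0); rewrite inrank_stack.
Qed.

Lemma chi_u_level_stack i : i <= l -> is_chi_u stack_edge (level stack_arc i) k.
Proof.
rewrite -ltnS => lt_il; split.
  rewrite ucolorableE; apply/colorableP; exists (fun u => (nat_of_ord u.2).+1).
  by split=> // [u _|u v _ _ /andP[_ ne_2]]; rewrite ?eqSS ?ltn_ord.
move=> j; rewrite ucolorableE => col_j.
pose A := [set (Ordinal lt_il, y) | y : 'I_k].
have card_A : #|A| = k by rewrite card_imset ?card_ord // => y y' [].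
rewrite -card_A; apply: clique_card_leq col_j _ _.
  by apply/subsetP => _ /imsetP[y _ ->]; rewrite inE inrank_stack.
move=> _ _ /imsetP[y _ ->] /imsetP[y' _ ->] ne_yy'.
apply/orP; left; rewrite /stack_edge /= eqxx.
by apply: contra_neq ne_yy' => ->.
Qed.

Lemma chi_stack : is_chi stack_edge stack_arc [set: 'I_l.+1 * 'I_k] (l.+1 * k).
Proof.
split.
  apply/colorableP; exists (fun u : 'I_l.+1 * 'I_k => u.1 * k + u.2 + 1).
  split=> [[[i lt_il] [y lt_yk]] _|[i y] [i' y'] _ _|].
  - by rewrite addn1 /=; nia.
  - by case/andP=> /= /eqP <- ne_y; rewrite eqn_add2r eqn_add2l.
  move=> [[i lt_il] [y lt_yk]] [[i' lt_il'] [y' lt_yk']] _ _.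
  by rewrite /stack_arc /=; nia.
move=> j col_j.
have card_U : #|[set: 'I_l.+1 * 'I_k]| = l.+1 * k by rewrite cardsT card_prod !card_ord.
rewrite -card_U; apply: clique_card_leq col_j (subxx _) _.
move=> [i y] [i' y'] _ _ ne_uv; rewrite /stack_arc /=.
case: ltngtP => [||/val_inj eq_i]; rewrite ?orbT //.
rewrite /stack_edge /= eq_i eqxx orbF; apply: contra_neq ne_uv => <-.
by rewrite eq_i.
Qed.

End StackedCliques.

Theorem mainTheorem9 :
  (forall (T : finType) (e a : rel T) (chiG : nat) (chiL : nat -> nat),
      mixed_graph e a ->
      is_chi e a [set: T] chiG ->
      (forall i, i <= maxrank a -> is_chi_u e (level a i) (chiL i)) ->
      chiG <= \sum_(i < (maxrank a).+1) chiL i)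
  /\
  (forall l k : nat, 1 <= l -> 1 <= k ->
     exists (T : finType) (e a : rel T),
       [/\ mixed_graph e a,
           maxrank a = l,
           (forall i, i <= l -> is_chi_u e (level a i) k)
         & is_chi e a [set: T] (l.+1 * k)]).
Proof.
split=> [|l k _ k_gt0]; first exact: chi_le_sum_chi_u_levels.
exists ('I_l.+1 * 'I_k)%type, (@stack_edge l k), (@stack_arc l k).
split; [exact: stack_mixed_graph | exact: maxrank_stack |
       exact: chi_u_level_stack | exact: chi_stack].
Qed.
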